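(* Let $v_1,\dots,v_m$ be distinct values, let $X_1,\dots,X_n$ be finite domain variables with domains $D(X_i)\subseteq\{v_1,\dots,v_m\}$, and let $B_{i,j}$ ($1\le i\le n$, $1\le j\le m$) be 0/1 variables. Consider the decomposition consisting of: the channelling constraints $X_i=v_j \leftrightarrow B_{i,j}=1$ for all $1\le i\le n$, $1\le j\le m$; the constraints $[B_{1,j},\dots,B_{n,j}]\ge_{\mathrm{lex}}[B_{1,j+1},\dots,B_{n,j+1}]$ for $1\le j<m$; and the constraints $\sum_{j=1}^m B_{i,j}=1$ for $1\le i\le n$. Then enforcing GAC on $\mathrm{Precedence}([v_1,\dots,v_m],[X_1,\dots,X_n])$ is strictly stronger than enforcing GAC on each constraint of this decomposition. That is: (i) if $\mathrm{Precedence}([v_1,\dots,v_m],[X_1,\dots,X_n])$ is GAC (with all $D(X_i)$ nonempty) and the domains of the $B_{i,j}$ are $D(B_{i,j})=\{1 \mid v_j\in D(X_i)\}\cup\{0\mid D(X_i)\neq\{v_j\}\}$, then every constraint of the decomposition is GAC; and (ii) there exist domains for the $X_i$ and $B_{i,j}$ such that every constraint of the decomposition is GAC but $\mathrm{Precedence}([v_1,\dots,v_m],[X_1,\dots,X_n])$ is not GAC.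
   Context: A support of a constraint is an assignment of a value from its domain to each of its variables that satisfies it; a constraint is GAC iff every value in every variable's domain belongs to some support. For distinct values $a,b$, $\mathrm{Precedence}([a,b],[X_1,\dots,X_n])$ holds iff $\min\{i \mid X_i=a \text{ or } i=n+1\} < \min\{i \mid X_i=b \text{ or } i=n+2\}$; $\mathrm{Precedence}([v_1,\dots,v_m],[X_1,\dots,X_n])$ holds iff $\mathrm{Precedence}([v_i,v_{i+1}],[X_1,\dots,X_n])$ holds for all $1\le i<m$. $\ge_{\mathrm{lex}}$ is the non-strict lexicographic order on 0/1 vectors. *)

From mathcomp Require Import all_boot.
Set Implicit Arguments. Unset Strict Implicit. Unset Printing Implicit Defensive.

(* Values v_1,...,v_m are represented by their (0-based) indices j : 'I_m;
   the X-variables X_1..X_n by i : 'I_n (0-based), the 0/1 variables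
   B_{i,j} by booleans (true = 1, false = 0). *)

Record asg (n m : nat) := Asg { ax : 'I_n -> 'I_m ; ab : 'I_n -> 'I_m -> bool }.

(* Generalized arc consistency of a constraint C whose scope consists of the
   X-variables in sx and the B-variables in sb, w.r.t. domains DX, DB.
   (C is only ever applied to relations depending on the scope variables.) *)
Definition support n m (DX : 'I_n -> {set 'I_m}) (DB : 'I_n -> 'I_m -> {set bool})
  (sx : pred 'I_n) (sb : 'I_n -> 'I_m -> bool) (C : asg n m -> bool) (s : asg n m) :=
  [/\ C s, (forall i, sx i -> ax s i \in DX i)
         & (forall i j, sb i j -> ab s i j \in DB i j)].

Definition GAC n m (DX : 'I_n -> {set 'I_m}) (DB : 'I_n -> 'I_m -> {set bool})
  (sx : pred 'I_n) (sb : 'I_n -> 'I_m -> bool) (C : asg n m -> bool) : Prop :=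
  (forall i, sx i -> forall a, a \in DX i ->
      exists s, support DX DB sx sb C s /\ ax s i = a) /\
  (forall i j, sb i j -> forall c, c \in DB i j ->
      exists s, support DX DB sx sb C s /\ ab s i j = c).

Definition first_or n m (x : 'I_n -> 'I_m) (a : 'I_m) (d : nat) : nat :=
  let k := find (fun i => x i == a) (enum 'I_n) in if k < n then k else d.

(* Precedence([a,b],[X_1..X_n]) (0-based version of the paper's definition:
   the defaults n+1, n+2 become n, n+1). *)
Definition prec2 n m (x : 'I_n -> 'I_m) (a b : 'I_m) : bool :=
  first_or x a n < first_or x b n.+1.

Definition precedence n m (x : 'I_n -> 'I_m) : bool :=
  [forall j : 'I_m, forall k : 'I_m, (val k == (val j).+1) ==> prec2 x j k].

Fixpoint lexge (s t : seq bool) : bool :=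
  match s, t with
  | x :: s', y :: t' => (y < x) || ((x == y) && lexge s' t')
  | _, _ => true
  end.

Definition prec_con n m (s : asg n m) : bool := precedence (ax s).
Definition prec_sx n : pred 'I_n := predT.
Definition no_b n m : 'I_n -> 'I_m -> bool := fun _ _ => false.

Definition chan_con n m (i : 'I_n) (j : 'I_m) (s : asg n m) : bool :=
  (ax s i == j) == ab s i j.
Definition chan_sx n (i : 'I_n) : pred 'I_n := pred1 i.
Definition chan_sb n m (i : 'I_n) (j : 'I_m) : 'I_n -> 'I_m -> bool :=
  fun i' j' => (i' == i) && (j' == j).

Definition lex_con n m (j k : 'I_m) (s : asg n m) : bool :=
  lexge [seq ab s i j | i <- enum 'I_n] [seq ab s i k | i <- enum 'I_n].
Definition lex_sb n m (j k : 'I_m) : 'I_n -> 'I_m -> bool :=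
  fun _ j' => (j' == j) || (j' == k).

Definition sum_con n m (i : 'I_n) (s : asg n m) : bool :=
  \sum_(j < m) nat_of_bool (ab s i j) == 1.
Definition row_sb n m (i : 'I_n) : 'I_n -> 'I_m -> bool := fun i' _ => i' == i.

Definition no_x n : pred 'I_n := pred0.

Definition decomp_GAC n m (DX : 'I_n -> {set 'I_m}) (DB : 'I_n -> 'I_m -> {set bool}) :=
  [/\ (forall i j, GAC DX DB (chan_sx i) (chan_sb i j) (chan_con i j)),
      (forall j k : 'I_m, val k = (val j).+1 ->
          GAC DX DB (@no_x n) (lex_sb j k) (lex_con j k))
    & (forall i, GAC DX DB (@no_x n) (row_sb i) (sum_con i))].

Definition prec_GAC n m (DX : 'I_n -> {set 'I_m}) (DB : 'I_n -> 'I_m -> {set bool}) :=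
  GAC DX DB (@prec_sx n) (@no_b n m) (@prec_con n m).

Definition induced_DB n m (DX : 'I_n -> {set 'I_m}) : 'I_n -> 'I_m -> {set bool} :=
  fun i j => [set b : bool | (b && (j \in DX i)) || (~~ b && (DX i != [set j]))].

From Pilot Require Import Defs.
From mathcomp Require Import all_boot zify.
Set Implicit Arguments. Unset Strict Implicit. Unset Printing Implicit Defensive.

(* (i) Every value of an X-variable extends to a support of Precedence, i.e.
   to an assignment x of all X-variables satisfying Precedence.  Channelling
   x into B_{i,j} := (x_i = v_j) ("channel x") satisfies every constraint of
   the decomposition: channelling and row sums hold for any x, and the lex
   constraint between columns j and j+1 holds because the first occurrence of
   v_j precedes that of v_{j+1}.  Every value of the induced B-domains is of
   the form (a = v_j) for some a in D(X_i), so these channelled supports cover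
   all values of all variables ([channel_GAC]).

   (ii) With n = 1, m = 2 and full domains the decomposition is GAC (again
   via channelled supports, plus constant columns for lex), whereas X_1 = v_2
   has no support, since Precedence forces X_1 = v_1 ([precedence_head]). *)

Definition channel n m (x : 'I_n -> 'I_m) : asg n m := Asg x (fun i j => x i == j).

Lemma lexge_find (T : Type) (p q : pred T) (s : seq T) :
  (forall y, p y -> ~~ q y) -> find p s <= find q s ->
  lexge (map p s) (map q s).
Proof.
move=> disj; elim: s => //= y s IH.
case py: (p y); first by rewrite (negbTE (disj y py)).
by case: (q y).
Qed.

Lemma lexge_refl (s : seq bool) : lexge s s.
Proof. by elim: s => //= x s ->; rewrite eqxx orbT. Qed.

Lemma prec2_find n m (x : 'I_n -> 'I_m) (a b : 'I_m) : prec2 x a b ->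
  find (fun i => x i == a) (enum 'I_n) <= find (fun i => x i == b) (enum 'I_n).
Proof.
rewrite /prec2 /first_or.
have := find_size (fun i => x i == a) (enum 'I_n).
have := find_size (fun i => x i == b) (enum 'I_n).
by rewrite size_enum_ord; case: ifP; case: ifP; lia.
Qed.

Lemma channel_chan n m (x : 'I_n -> 'I_m) i j : chan_con i j (channel x).
Proof. by rewrite /chan_con eqxx. Qed.

Lemma channel_sum n m (x : 'I_n -> 'I_m) i : sum_con i (channel x).
Proof.
rewrite /sum_con /= (bigD1 (x i)) //= eqxx big1 // => j.
by rewrite eq_sym => /negbTE ->.
Qed.

Lemma channel_lex n m (x : 'I_n -> 'I_m) (j k : 'I_m) :
  precedence x -> val k = (val j).+1 -> lex_con j k (channel x).
Proof.
move=> /forallP /(_ j) /forallP /(_ k) /implyP prec_jk kj.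
have /prec2_find first_jk : prec2 x j k by apply: prec_jk; rewrite kj.
rewrite /lex_con /=; apply: lexge_find first_jk => i /eqP ->.
by apply/eqP => /(congr1 val); rewrite kj => /n_Sn.
Qed.

Lemma first_or_head n m (x : 'I_n.+1 -> 'I_m) d : first_or x (x ord0) d = 0.
Proof. by rewrite /first_or enum_ordSl /= eqxx. Qed.

Lemma precedence_head n m (x : 'I_n.+1 -> 'I_m) : precedence x -> val (x ord0) = 0.
Proof.
move=> prec; case E: (nat_of_ord (x ord0)) => [|k] //.
have km : k < m by move: (ltn_ord (x ord0)); rewrite E => /ltnW.
move/forallP: prec => /(_ (Ordinal km)) /forallP /(_ (x ord0)) /implyP prec.
have /prec : val (x ord0) == (val (Ordinal km)).+1 by rewrite /= E.
by rewrite /prec2 first_or_head.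
Qed.

Section InducedDomains.
Variables (n m : nat) (DX : 'I_n -> {set 'I_m}).
Hypothesis DX_nonempty : forall i, DX i != set0.

Lemma induced_DB_witness i j (c : bool) :
  c \in induced_DB DX i j -> exists2 a, a \in DX i & (a == j) = c.
Proof.
rewrite /induced_DB in_set; case: c => /= [|DXj].
  by rewrite orbF => jDX; exists j; rewrite ?eqxx.
have [a /andP[aDX aj] | none] := pickP (fun a => (a \in DX i) && (a != j)).
  by exists a; rewrite ?(negbTE aj).
have sub : DX i \subset [set j].
  by apply/subsetP => a aDX; move: (none a); rewrite /= aDX in_set1 => /negbFE.
by move: sub; rewrite subset1 (negbTE DXj) (negbTE (DX_nonempty i)).
Qed.

Lemma channel_dom (x : 'I_n -> 'I_m) : (forall i, x i \in DX i) ->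
  forall i j, ab (channel x) i j \in induced_DB DX i j.
Proof.
move=> xDX i j; rewrite /induced_DB in_set /=.
have [<-|xj] /= := eqVneq (x i) j.
  by rewrite xDX.
by apply: contraNneq xj => DXj; rewrite -in_set1 -DXj.
Qed.

Lemma channel_GAC (P : pred ('I_n -> 'I_m)) {sx sb} {C : asg n m -> bool} :
  (forall i a, a \in DX i ->
     exists x, [/\ P x, forall i', x i' \in DX i' & x i = a]) ->
  (forall x, P x -> C (channel x)) ->
  GAC DX (induced_DB DX) sx sb C.
Proof.
move=> extend PC.
have supp i a : a \in DX i -> exists2 x,
    Defs.support DX (induced_DB DX) sx sb C (channel x) & x i = a.
  case/extend => x [Px xDX xa]; exists x => //.
  by split; [exact: PC | move=> i' _; exact: xDX | move=> *; exact: channel_dom].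
split.
  by move=> i _ a /supp[x Sx xa]; exists (channel x).
move=> i j _ c /induced_DB_witness[a /supp[x Sx xa] aj].
by exists (channel x); rewrite /= xa.
Qed.

End InducedDomains.

Lemma prec_GAC_decomp_GAC n m (DX : 'I_n -> {set 'I_m}) :
  (forall i, DX i != set0) -> prec_GAC DX (induced_DB DX) ->
  decomp_GAC DX (induced_DB DX).
Proof.
move=> DXne [precX _].
have extend i a : a \in DX i ->
    exists x, [/\ precedence x, forall i', x i' \in DX i' & x i = a].
  by case/(precX i isT) => s [[prec sDX _] sa]; exists (ax s); split => // i'; apply: sDX.
split.
- by move=> i j; apply: (channel_GAC DXne extend) => x _; exact: channel_chan.
- by move=> j k kj; apply: (channel_GAC DXne extend) => x prec; exact: channel_lex.
- by move=> i; apply: (channel_GAC DXne extend) => x _; exact: channel_sum.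
Qed.

Definition DX_full : 'I_1 -> {set 'I_2} := fun _ => setT.

(* Since m = 2, the induced B-domains are full as well. *)
Lemma induced_DB_full i j (c : bool) : c \in induced_DB DX_full i j.
Proof.
rewrite /induced_DB /DX_full in_set in_setT /=; case: c => //=.
by apply/eqP => full_j; have := cardsT 'I_2; rewrite full_j cards1 card_ord.
Qed.

Lemma DX_full_nonempty i : DX_full i != set0.
Proof. by apply/set0Pn; exists ord0; rewrite in_setT. Qed.

Lemma decomp_GAC_full : decomp_GAC DX_full (induced_DB DX_full).
Proof.
have extend i a : a \in DX_full i ->
    exists x, [/\ predT x, forall i', x i' \in DX_full i' & x i = a].
  by move=> _; exists (fun _ => a); split => // i'; rewrite in_setT.
split.
- by move=> i j; apply: (channel_GAC DX_full_nonempty extend) => x _; exact: channel_chan.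
- (* lex: a constant B-matrix makes both columns equal *)
  move=> j k _; split => // i j' _ c _.
  exists (Asg (fun _ => ord0) (fun _ _ => c)); split => //; split => //.
    exact: lexge_refl.
  by move=> *; exact: induced_DB_full.
- by move=> i; apply: (channel_GAC DX_full_nonempty extend) => x _; exact: channel_sum.
Qed.

Lemma not_prec_GAC_full : ~ prec_GAC DX_full (induced_DB DX_full).
Proof.
case=> [precX _]; have [s [[prec _ _] s_last]] := precX ord0 isT ord_max (in_setT _).
by have := precedence_head prec; rewrite s_last.
Qed.

Theorem theorem5 :
  (forall (n m : nat) (DX : 'I_n -> {set 'I_m}),
      (forall i, DX i != set0) ->
      prec_GAC DX (induced_DB DX) ->
      decomp_GAC DX (induced_DB DX))
  /\
  (exists (n m : nat) (DX : 'I_n -> {set 'I_m}) (DB : 'I_n -> 'I_m -> {set bool}),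
      [/\ (forall i, DX i != set0), (forall i j, DB i j != set0),
          decomp_GAC DX DB & ~ prec_GAC DX DB]).
Proof.
split; first exact: prec_GAC_decomp_GAC.
exists 1, 2, DX_full, (induced_DB DX_full); split.
- exact: DX_full_nonempty.
- by move=> i j; apply/set0Pn; exists true; apply: induced_DB_full.
- exact: decomp_GAC_full.
- exact: not_prec_GAC_full.
Qed.
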